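(* A scheduling policy $\eta$ fulfills a strictly feasible system if, in every frame $k$, it maximizes $\sum_{X\in S}\tilde q_X(k)\,d_X(k)$ among all feasible $[q_X]$, i.e. $\sum_{X\in S}\tilde q_X(k)\,d_X(k)\ge \max_{[q_X]\text{ feasible}}\sum_{X\in S} q_X\,d_X(k)$. It is a feasibility optimal policy if this holds for all strictly feasible systems.
   Context: A system consists of a finite set $S$ of tasks. Time is slotted, $t\in\{0,1,2,\dots\}$. Each task $X\in S$ has a period $\tau_X$ (a positive integer); time is partitioned into consecutive periods of $X$ of $\tau_X$ slots each, the first starting at $t=0$, and in each period $X$ has one job, removed at the end of the period. Let $T=\mathrm{lcm}\{\tau_X : X\in S\}$; time is partitioned into consecutive frames of $T$ slots each, the $k$-th frame ($k=1,2,\dots$) being the $k$-th such block starting from $t=0$. A scheduling policy (possibly randomized) chooses in each slot either to idle or to execute the job of exactly one task. Each task $X$ has rewards $r^1_X\ge r^2_X\ge\dots\ge r^{\tau_X}_X\ge 0$: executing the job of $X$ for the $i$-th time within a period yields reward $r^i_X$ to $X$. Let $s_X(t)$ be the total reward obtained by $X$ between time 0 and $t$; the average reward is $q_X=\liminf_{t\to\infty}s_X(t)/(t/T)$. Each task has a minimum requirement $q^*_X>0$; a policy fulfills the system if $q_X\ge q^*_X$ with probability 1 for all $X\in S$. The system is feasible if some policy fulfills it, and strictly feasible if there is $\epsilon>0$ such that the same system with requirements $[(1+\epsilon)q^*_X]$ is feasible. A vector $[q_X : X\in S]$ is called feasible if the system with the same tasks, periods and rewards and requirements $[q_X]$ is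 feasible. A policy is feasibility optimal if it fulfills all strictly feasible systems. Let $\tilde q_X(k)$ be the total reward obtained by $X$ during the $k$-th frame. The debt of $X$ is $d_X(0)=0$, $d_X(k)=[d_X(k-1)+q^*_X-\tilde q_X(k)]^+$ for $k>0$, with $[x]^+=\max\{x,0\}$. *)

From HB Require Import structures.
From mathcomp Require Import all_boot all_order all_algebra.
From mathcomp Require Import all_classical all_reals all_analysis.
Set Implicit Arguments. Unset Strict Implicit. Unset Printing Implicit Defensive.
Import Order.TTheory GRing.Theory Num.Theory.
Local Open Scope ring_scope.

(* A system: tasks form a finite type [S]; [tau X] is the period of X;
   [r X i] is the reward r^i_X for the i-th execution (i >= 1) within a period.
   A schedule [sigma : nat -> option S] says, for each slot t, whether it idles
   ([None]) or executes the job of task X ([Some X]). *)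

Section Model.
Variables (R : realType) (S : finType) (tau : S -> nat) (r : S -> nat -> R).

Definition frameT : nat := \big[lcmn/1%N]_(X : S) tau X.

Definition period_start (X : S) (t : nat) : nat := (t %/ tau X * tau X)%N.

Definition execs_before (sigma : nat -> option S) (X : S) (t : nat) : nat :=
  count (fun u => sigma u == Some X) (iota (period_start X t) (t - period_start X t)).

Definition slot_reward (sigma : nat -> option S) (X : S) (t : nat) : R :=
  if sigma t == Some X then r X (execs_before sigma X t).+1 else 0.

Definition cum_reward (sigma : nat -> option S) (X : S) (t : nat) : R :=
  \sum_(0 <= u < t) slot_reward sigma X u.

Definition avg_reward (sigma : nat -> option S) (X : S) : \bar R :=
  limn_einf (fun t : nat => (cum_reward sigma X t / (t%:R / (frameT%:R)))%:E).

(* tilde q_X(k+1): reward of X during the (k+1)-th frame, i.e. slots kT .. (k+1)T - 1 *)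
Definition frame_reward (sigma : nat -> option S) (X : S) (k : nat) : R :=
  \sum_(k * frameT <= u < k.+1 * frameT) slot_reward sigma X u.

Fixpoint debt (qstar : S -> R) (sigma : nat -> option S) (X : S) (k : nat) : R :=
  match k with
  | 0 => 0
  | k'.+1 => Num.max (debt qstar sigma X k' + qstar X - frame_reward sigma X k') 0
  end.

(* A (possibly randomized) policy is a random schedule on a probability space
   (Omega, P); it fulfills requirements [q] if, for every task X,
   q_X >= q*_X holds with probability 1. *)
Definition fulfills (d : measure_display) (Omega : measurableType d)
  (P : probability Omega R) (sched : Omega -> nat -> option S) (q : S -> R) : Prop :=
  forall X : S, {ae P, forall w, ((q X)%:E <= avg_reward (sched w) X)%E}.

Definition feasible (q : S -> R) : Prop :=
  exists (d : measure_display) (Omega : measurableType d)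
         (P : probability Omega R) (sched : Omega -> nat -> option S),
    fulfills P sched q.

Definition strictly_feasible (qstar : S -> R) : Prop :=
  exists eps : R, 0 < eps /\ feasible (fun X => (1 + eps) * qstar X).

Definition valid_system (qstar : S -> R) : Prop :=
  (forall X, (0 < tau X)%N) /\
  (forall X i, (1 <= i < tau X)%N -> r X i.+1 <= r X i) /\
  (forall X, 0 <= r X (tau X)) /\
  (forall X, 0 < qstar X).

End Model.

From HB Require Import structures.
From mathcomp Require Import all_boot all_order all_algebra.
From mathcomp Require Import all_classical all_reals all_analysis.
From mathcomp Require Import zify ring lra.
Set Implicit Arguments. Unset Strict Implicit. Unset Printing Implicit Defensive.
Import Order.TTheory GRing.Theory Num.Theory.
Local Open Scope ring_scope.
Local Open Scope classical_set_scope.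

(* The debts behave like queues.  Since (1 + eps) q* is feasible, the
   max-weight condition gives sum_X q*_X d_X(k) <= sum_X q~_X(k) d_X(k), so the
   drift of the Lyapunov function sum_X d_X(k)^2 is bounded by a constant and
   d_X(k) = O(sqrt k).  As k q*_X minus the reward of X in the first k frames
   is at most d_X(k), the average reward of X per frame is eventually at least
   q*_X - e for every e > 0, along every realisation of the schedule. *)

Lemma limn_einf_ge (R : realType) (u : (\bar R)^nat) (a : R) :
  (forall e, 0 < e -> \forall n \near \oo, ((a - e)%:E <= u n)%E) ->
  (a%:E <= limn_einf u)%E.
Proof.
move=> ua; rewrite limn_einf_lim; apply/lee_subgt0Pr => e e0.
rewrite -EFinB; apply: lime_ge; first exact: is_cvg_einfs.
have [N _ uN] := ua e e0.
near=> n; apply: le_ereal_inf_tmp => _ [t /= nt <-]; apply: uN.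
by apply: leq_trans nt; near: n; exists N.
Unshelve. all: by end_near.
Qed.

Lemma sqr_max0_le (R : realDomainType) (a : R) : Num.max a 0 ^+ 2 <= a ^+ 2.
Proof. by case: (leP a 0) => h; rewrite ?expr0n /= ?sqr_ge0. Qed.

Lemma sqr_max0_drift (R : realDomainType) (d q f F : R) :
  0 <= q -> 0 <= f <= F ->
  Num.max (d + q - f) 0 ^+ 2 <= d ^+ 2 + 2 * (d * q - f * d) + (q + F) ^+ 2.
Proof. by move=> q0 /andP[f0 fF]; apply: le_trans (sqr_max0_le _) _; nra. Qed.

Lemma linear_dominates_sqrt (R : realType) (B q e : R) : 0 <= B -> 0 < e ->
  exists K : nat, forall (k : nat) (d : R), (K <= k)%N ->
    d ^+ 2 <= k%:R * B -> k.+1%:R * (q - e) <= k%:R * q - d.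
Proof.
move=> B0 e0; set x := (4 * B + 2 * `|q| * e) / e ^+ 2.
have x0 : 0 <= x.
  by rewrite divr_ge0 ?sqr_ge0 // addr_ge0 ?mulr_ge0 ?(ltW e0) ?mulrn_wge0.
exists (Num.Def.archi_bound x) => k d Kk dB.
have kx : x < k%:R by apply: lt_le_trans (archi_boundP x0) _; rewrite ler_nat.
have ke2 : 4 * B + 2 * `|q| * e < k%:R * e ^+ 2.
  by rewrite -ltr_pdivrMr ?exprn_gt0.
have qq : q <= `|q| := ler_norm q.
have k0 : 0 <= k%:R :> R by [].
have ke : 2 * `|q| <= k%:R * e.
  by rewrite -(ler_pM2r e0); nra.
have kd : 2 * d <= k%:R * e.
  have [d0|d0] := leP d 0; first by nra.
  have kB : 4 * (k%:R * B) <= k%:R * (k%:R * e ^+ 2).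
    rewrite mulrCA; apply: ler_wpM2l => //.
    have : 0 <= `|q| * e by rewrite mulr_ge0 // ltW.
    lra.
  have : (2 * d) ^+ 2 <= (k%:R * e) ^+ 2.
    have -> : (2 * d) ^+ 2 = 4 * d ^+ 2 by ring.
    have -> : (k%:R * e) ^+ 2 = k%:R * (k%:R * e ^+ 2) by ring.
    lra.
  by rewrite ler_sqr ?nnegrE ?mulr_ge0 ?(ltW d0) ?(ltW e0).
rewrite -natr1; nra.
Qed.

Section Schedule.
Variables (R : realType) (S : finType) (tau : S -> nat) (r : S -> nat -> R).
Hypothesis tau_gt0 : forall X, (0 < tau X)%N.
Hypothesis r_nonincr : forall X i, (1 <= i < tau X)%N -> r X i.+1 <= r X i.
Hypothesis r_last_ge0 : forall X, 0 <= r X (tau X).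

Local Notation T := (frameT tau).

Lemma reward_antimono X i j : (1 <= i)%N -> (i <= j <= tau X)%N -> r X j <= r X i.
Proof.
move=> i1; elim: j => [|j IH] /andP[ij jt]; first by lia.
rewrite leq_eqVlt in ij; case/orP: ij => [/eqP-> //|ij].
have j_range : (0 < j < tau X)%N by lia.
have ij' : (i <= j <= tau X)%N by lia.
exact: le_trans (r_nonincr j_range) (IH ij').
Qed.

Lemma execs_before_lt sigma X t : (execs_before tau sigma X t < tau X)%N.
Proof.
apply: leq_ltn_trans (count_size _ _) _; rewrite size_iota /period_start.
have := divn_eq t (tau X); have := ltn_pmod t (tau_gt0 X); lia.
Qed.

Lemma slot_reward_bounds sigma X t : 0 <= slot_reward tau r sigma X t <= r X 1.
Proof.
have tX := tau_gt0 X; rewrite /slot_reward; case: ifP => _.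
  have i_range := execs_before_lt sigma X t.
  rewrite (le_trans (r_last_ge0 X)) ?reward_antimono //=; lia.
by rewrite lexx (le_trans (r_last_ge0 X)) ?reward_antimono //; lia.
Qed.

Lemma frameT_gt0 : (0 < T)%N.
Proof.
rewrite /frameT; elim/big_ind: _ => // a b a0 b0.
by rewrite lcmn_gt0 a0 b0.
Qed.

Lemma frame_reward_bounds sigma X k :
  0 <= frame_reward tau r sigma X k <= T%:R * r X 1.
Proof.
rewrite /frame_reward; apply/andP; split.
  by apply: sumr_ge0 => u _; have /andP[] := slot_reward_bounds sigma X u.
have -> : T%:R * r X 1 = \sum_(k * T <= u < k.+1 * T) r X 1.
  by rewrite sumr_const_nat mulr_natl mulSn; congr (_ *+ _); lia.
by apply: ler_sum => u _; have /andP[] := slot_reward_bounds sigma X u.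
Qed.

Lemma cum_reward_frames sigma X k :
  cum_reward tau r sigma X (k * T) = \sum_(j < k) frame_reward tau r sigma X j.
Proof.
elim: k => [|k IH]; first by rewrite mul0n /cum_reward big_geq // big_ord0.
rewrite big_ord_recr /= -IH /cum_reward /frame_reward.
by rewrite (big_cat_nat _ (n := k * T)) //= leq_mul2r leqnSn orbT.
Qed.

Lemma cum_reward_nondecr sigma X :
  {homo cum_reward tau r sigma X : m n / (m <= n)%N >-> m <= n}.
Proof.
move=> m n mn; rewrite /cum_reward (big_cat_nat (leq0n m) mn) /= lerDl.
by apply: sumr_ge0 => u _; have /andP[] := slot_reward_bounds sigma X u.
Qed.

(* Rewards are nonnegative and [t < (k + 1) T] for [k = t %/ T]. *)
Lemma frame_average_le sigma X t : (T <= t)%N ->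
  cum_reward tau r sigma X (t %/ T * T) / (t %/ T).+1%:R
  <= cum_reward tau r sigma X t / (t%:R / T%:R).
Proof.
move=> Tt; set k := (t %/ T)%N; set c := cum_reward tau r sigma X.
have T0 : 0 < T%:R :> R by rewrite ltr0n frameT_gt0.
have t0 : 0 < t%:R :> R by rewrite ltr0n (leq_trans frameT_gt0).
have tk : t%:R <= T%:R * k.+1%:R :> R.
  by rewrite -natrM ler_nat mulnC ltnW // ltn_ceil ?frameT_gt0.
have c0 : 0 <= c t.
  apply: le_trans (cum_reward_nondecr sigma X (leq0n t)).
  by rewrite /c /cum_reward big_geq.
have ckt : c (k * T)%N <= c t by apply: cum_reward_nondecr; rewrite leq_divM.
rewrite invf_div mulrA.
apply: le_trans (_ : c t / k.+1%:R <= _); first by rewrite ler_pM2r ?invr_gt0 ?ltr0n.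
by rewrite -mulrA ler_wpM2l // ler_pdivlMr // mulrC ler_pdivrMr ?ltr0n.
Qed.

Variable qstar : S -> R.
Hypothesis qstar_ge0 : forall X, 0 <= qstar X.

Local Notation debt := (debt tau r qstar).
Local Notation frame_reward := (frame_reward tau r).

Lemma debt_ge0 sigma X k : 0 <= debt sigma X k.
Proof. by case: k => //= k; rewrite le_max lexx orbT. Qed.

Lemma deficit_le_debt sigma X k :
  k%:R * qstar X - cum_reward tau r sigma X (k * T) <= debt sigma X k.
Proof.
rewrite cum_reward_frames.
elim: k => [|k IH]; first by rewrite big_ord0 mul0r subr0.
rewrite /= big_ord_recr /= le_max -natr1; apply/orP; left; lra.
Qed.

Definition nonpositive_debt_drift sigma := forall k,
  \sum_(X : S) qstar X * debt sigma X k
  <= \sum_(X : S) frame_reward sigma X k * debt sigma X k.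

Definition debt_drift_bound := \sum_(X : S) (qstar X + T%:R * r X 1) ^+ 2.

Lemma sum_debt_sqr_le sigma : nonpositive_debt_drift sigma ->
  forall k, \sum_(X : S) debt sigma X k ^+ 2 <= k%:R * debt_drift_bound.
Proof.
move=> drift; elim=> [|k IH]; first by rewrite mul0r big1 // => X _; rewrite expr0n.
have step X : debt sigma X k.+1 ^+ 2 <= debt sigma X k ^+ 2
    + 2 * (debt sigma X k * qstar X - frame_reward sigma X k * debt sigma X k)
    + (qstar X + T%:R * r X 1) ^+ 2.
  exact: sqr_max0_drift (qstar_ge0 X) (frame_reward_bounds sigma X k).
apply: le_trans (ler_sum _ (fun X _ => step X)) _.
rewrite !big_split /= -mulr_sumr sumrB -/debt_drift_bound -natr1.
have : \sum_(X : S) debt sigma X k * qstar X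
    <= \sum_(X : S) frame_reward sigma X k * debt sigma X k.
  by under eq_bigr do rewrite mulrC; exact: drift.
lra.
Qed.

Lemma debt_drift_bound_ge0 : 0 <= debt_drift_bound.
Proof. by apply: sumr_ge0 => X _; apply: sqr_ge0. Qed.

Lemma avg_reward_ge_qstar sigma X : nonpositive_debt_drift sigma ->
  ((qstar X)%:E <= avg_reward tau r sigma X)%E.
Proof.
move=> drift; apply: limn_einf_ge => e e0.
have [K HK] := linear_dominates_sqrt (qstar X) debt_drift_bound_ge0 e0.
near=> t; set k := (t %/ T)%N.
have Kk : (K < k)%N.
  by rewrite leq_divRL ?frameT_gt0 //; near: t; exists (K.+1 * T)%N.
have dsq : debt sigma X k ^+ 2 <= k%:R * debt_drift_bound.
  apply: le_trans (sum_debt_sqr_le drift k).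
  by rewrite (bigD1 X) //= lerDl sumr_ge0 // => Y _; apply: sqr_ge0.
rewrite lee_fin; apply: le_trans (frame_average_le sigma X _); last first.
  by rewrite -(mul1n T) -leq_divRL ?frameT_gt0 // (leq_ltn_trans _ Kk).
rewrite ler_pdivlMr ?ltr0n // mulrC.
apply: le_trans (HK k _ (ltnW Kk) dsq) _.
by have := deficit_le_debt sigma X k; lra.
Unshelve. all: by end_near.
Qed.

End Schedule.

Theorem theorem7 (R : realType) (S : finType) (tau : S -> nat) (r : S -> nat -> R)
  (qstar : S -> R) (d : measure_display) (Omega : measurableType d)
  (P : probability Omega R) (sched : Omega -> nat -> option S) :
  valid_system tau r qstar ->
  strictly_feasible tau r qstar ->
  (forall (w : Omega) (k : nat) (q : S -> R), feasible tau r q ->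
     \sum_(X : S) q X * debt tau r qstar (sched w) X k
       <= \sum_(X : S) frame_reward tau r (sched w) X k * debt tau r qstar (sched w) X k) ->
  fulfills tau r P sched qstar.
Proof.
case=> tau_gt0 [r_nonincr [r_last_ge0 qstar_gt0]] [eps [eps0 feas]] max_weight X.
have qstar_ge0 Y : 0 <= qstar Y := ltW (qstar_gt0 Y).
apply: aeW => w; apply: avg_reward_ge_qstar => // k.
apply: le_trans (max_weight w k _ feas); apply: ler_sum => Y _.
by rewrite -mulrA ler_peMl ?mulr_ge0 ?debt_ge0 // lerDl ltW.
Qed.
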